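(* Let $\tau>0$, $\varepsilon\ne0$, $\kappa_{12}\in\mathbb R$. The system on $T^*S^2=\{(\gamma,p)\in\mathbb R^6:\langle\gamma,\gamma\rangle=1,\langle\gamma,p\rangle=0\}$ $$\dot\gamma_1=\tfrac{\varepsilon^2}\tau p_1,\ \dot\gamma_2=\tfrac{\varepsilon^2}\tau p_2,\ \dot\gamma_3=\tfrac{\varepsilon^2}\tau p_3,\quad \dot p_1=\tfrac1\tau\kappa_{12}p_2+\mu\gamma_1,\ \dot p_2=-\tfrac1\tau\kappa_{12}p_1+\mu\gamma_2,\ \dot p_3=\mu\gamma_3,$$ $$\mu=\frac{\kappa_{12}}\tau(p_1\gamma_2-p_2\gamma_1)-\frac{\varepsilon^2}\tau(p_1^2+p_2^2+p_3^2),$$ which is Hamiltonian with Hamiltonian $h=\frac{\varepsilon^2}{2\tau}(p_1^2+p_2^2+p_3^2)$ with respect to the symplectic form $\big(\sum_{i=1}^3dp_i\wedge d\gamma_i+\frac{\kappa_{12}}{\varepsilon^2}d\gamma_1\wedge d\gamma_2\big)|_{T^*S^2}$, is Liouville integrable on $T^*S^2$ with the first integrals $h$ and $$\Phi(\gamma,p)=\gamma_1p_2-\gamma_2p_1+\frac{\kappa_{12}}{2\varepsilon^2}(\gamma_1^2+\gamma_2^2).$$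
   Context: This is the reduced system of the three-dimensional Demchenko case without twisting: a balanced ball with gyroscope, whose inertia operator is proportional to the identity, rolling without slipping and twisting over a fixed sphere, with gyroscopic matrix $\kappa=\kappa_{12}\mathbf e_1\wedge\mathbf e_2$ and $\varepsilon=b/(b\pm a)$. *)

From Stdlib Require Import Reals.
From Coquelicot Require Import Coquelicot.
Open Scope R_scope.

(* A point (gamma, p) of R^6 (also used for tangent vectors). *)
Record st : Type := St { g1 : R; g2 : R; g3 : R; p1 : R; p2 : R; p3 : R }.

Definition st_add (x y : st) : st :=
  St (g1 x + g1 y) (g2 x + g2 y) (g3 x + g3 y)
     (p1 x + p1 y) (p2 x + p2 y) (p3 x + p3 y).
Definition st_scal (t : R) (x : st) : st :=
  St (t * g1 x) (t * g2 x) (t * g3 x) (t * p1 x) (t * p2 x) (t * p3 x).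
Definition st_zero : st := St 0 0 0 0 0 0.

Definition st_dist2 (x y : st) : R :=
  (g1 x - g1 y)^2 + (g2 x - g2 y)^2 + (g3 x - g3 y)^2 +
  (p1 x - p1 y)^2 + (p2 x - p2 y)^2 + (p3 x - p3 y)^2.

Definition onM (x : st) : Prop :=
  g1 x ^ 2 + g2 x ^ 2 + g3 x ^ 2 = 1 /\
  g1 x * p1 x + g2 x * p2 x + g3 x * p3 x = 0.

(* tangent space of T^*S^2 at x (kernel of the differentials of the constraints) *)
Definition tangent (x v : st) : Prop :=
  g1 x * g1 v + g2 x * g2 v + g3 x * g3 v = 0 /\
  g1 v * p1 x + g2 v * p2 x + g3 v * p3 x +
  g1 x * p1 v + g2 x * p2 v + g3 x * p3 v = 0.

Definition mu (tau eps k : R) (x : st) : R :=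
  k / tau * (p1 x * g2 x - p2 x * g1 x)
  - eps ^ 2 / tau * (p1 x ^ 2 + p2 x ^ 2 + p3 x ^ 2).

Definition vf (tau eps k : R) (x : st) : st :=
  St (eps ^ 2 / tau * p1 x) (eps ^ 2 / tau * p2 x) (eps ^ 2 / tau * p3 x)
     (1 / tau * k * p2 x + mu tau eps k x * g1 x)
     (- (1 / tau) * k * p1 x + mu tau eps k x * g2 x)
     (mu tau eps k x * g3 x).

Definition ham (tau eps : R) (x : st) : R :=
  eps ^ 2 / (2 * tau) * (p1 x ^ 2 + p2 x ^ 2 + p3 x ^ 2).
Definition Phi (eps k : R) (x : st) : R :=
  g1 x * p2 x - g2 x * p1 x + k / (2 * eps ^ 2) * (g1 x ^ 2 + g2 x ^ 2).

(* omega = sum_i dp_i /\ dgamma_i + (k/eps^2) dgamma_1 /\ dgamma_2,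
   with (a /\ b)(v,w) = a(v) b(w) - a(w) b(v). *)
Definition omega (eps k : R) (v w : st) : R :=
  (p1 v * g1 w - p1 w * g1 v) + (p2 v * g2 w - p2 w * g2 v)
  + (p3 v * g3 w - p3 w * g3 v)
  + k / eps ^ 2 * (g1 v * g2 w - g1 w * g2 v).

(* df_x(v) = l, as the derivative at 0 of t |-> f(x + t v) *)
Definition dd (f : st -> R) (x v : st) (l : R) : Prop :=
  is_derive (fun t => f (st_add x (st_scal t v))) 0 l.

From Stdlib Require Import Reals Lra.
From Coquelicot Require Import Coquelicot.
Open Scope R_scope.

(* The reaction force [mu * gamma] is normal to the sphere, and the magnetic
   term (k/eps^2) dgamma_1/\dgamma_2 of omega exactly absorbs the gyroscopic
   force (k/tau)(p_2, -p_1, 0); hence omega(v, X) = dh(v) for every tangent v,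
   i.e. X is the Hamiltonian field of h.  Then dh(X) = omega(X, X) = 0, and
   {h, Phi} = dPhi(X) = 0 because Phi is the momentum map of the rotations
   about e_3.  Nondegeneracy of omega at (gamma, p) is tested on a tangent w
   against (0, w_gamma), which gives |w_gamma|^2, and then against
   (w_p, -(w_p.p) gamma), which gives -|w_p|^2.  The differentials dh and dPhi
   are independent where p_3 <> 0, and at the poles gamma = +-e_3 where p <> 0;
   any point is brought into this set by a small change of p orthogonal to
   gamma, along gamma_3 gamma - e_3 away from the poles. *)

Definition dham (tau eps : R) (x v : st) : R :=
  eps ^ 2 / tau * (p1 x * p1 v + p2 x * p2 v + p3 x * p3 v).

Definition dPhi (eps k : R) (x v : st) : R :=
  g1 v * p2 x + g1 x * p2 v - g2 v * p1 x - g2 x * p1 v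
  + k / eps ^ 2 * (g1 x * g1 v + g2 x * g2 v).

Lemma dd_ham tau eps x v : dd (ham tau eps) x v (dham tau eps x v).
Proof.
destruct x, v; unfold dd, ham, dham, st_add, st_scal; cbn.
auto_derive; [exact I|].
(* [Rinv_mult] is unconditional (/ 0 = 0), so no hypothesis [tau <> 0] is needed
   once [/ tau] is hidden from [field]. *)
unfold Rdiv; rewrite Rinv_mult; set (t := / tau); field.
Qed.

Lemma dd_Phi eps k x v : dd (Phi eps k) x v (dPhi eps k x v).
Proof.
destruct x, v; unfold dd, Phi, dPhi, st_add, st_scal; cbn.
auto_derive; [exact I|].
unfold Rdiv; rewrite Rinv_mult; set (e := / (eps * (eps * 1))); field.
Qed.

Lemma dd_unique f x v l l' : dd f x v l -> dd f x v l' -> l = l'.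
Proof.
intros H H'; now rewrite <- (is_derive_unique _ _ _ H), <- (is_derive_unique _ _ _ H').
Qed.

Lemma vf_tangent tau eps k x : onM x -> tangent x (vf tau eps k x).
Proof.
intros [Hg Hgp]; unfold tangent, vf; cbn [g1 g2 g3 p1 p2 p3]; split.
- transitivity (eps ^ 2 / tau * (g1 x * p1 x + g2 x * p2 x + g3 x * p3 x)); [ring|].
  rewrite Hgp; ring.
- transitivity (mu tau eps k x * (g1 x ^ 2 + g2 x ^ 2 + g3 x ^ 2 - 1)); [|rewrite Hg; ring].
  unfold mu, Rdiv; ring.
Qed.

Lemma omega_nondegenerate eps k x w : onM x -> tangent x w ->
  (forall v, tangent x v -> omega eps k v w = 0) -> w = st_zero.
Proof.
destruct x as [a1 a2 a3 b1 b2 b3], w as [c1 c2 c3 d1 d2 d3].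
intros [Hg _] [Hw1 Hw2] Hortho; cbn [g1 g2 g3 p1 p2 p3] in *.
assert (Hc : omega eps k (St 0 0 0 c1 c2 c3) (St c1 c2 c3 d1 d2 d3) = 0).
{ apply Hortho; split; cbn; lra. }
unfold omega in Hc; cbn [g1 g2 g3 p1 p2 p3] in Hc.
assert (c1 = 0) by nra; assert (c2 = 0) by nra; assert (c3 = 0) by nra; subst c1 c2 c3.
set (s := d1 * b1 + d2 * b2 + d3 * b3).
assert (Hd : omega eps k (St d1 d2 d3 (- s * a1) (- s * a2) (- s * a3))
                         (St 0 0 0 d1 d2 d3) = 0).
{ apply Hortho; split; cbn [g1 g2 g3 p1 p2 p3]; [lra|].
  transitivity (s * (1 - (a1 ^ 2 + a2 ^ 2 + a3 ^ 2))); [unfold s; ring|].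
  rewrite Hg; ring. }
unfold omega in Hd; cbn [g1 g2 g3 p1 p2 p3] in Hd.
assert (d1 = 0) by nra; assert (d2 = 0) by nra; assert (d3 = 0) by nra; subst d1 d2 d3.
reflexivity.
Qed.

Lemma omega_diag eps k v : omega eps k v v = 0.
Proof. unfold omega; ring. Qed.

Lemma omega_vf tau eps k x v : tau <> 0 -> eps <> 0 ->
  omega eps k v (vf tau eps k x)
  = dham tau eps x v - mu tau eps k x * (g1 x * g1 v + g2 x * g2 v + g3 x * g3 v).
Proof.
intros Htau Heps; destruct x, v; unfold omega, vf, dham; cbn; field; auto.
Qed.

Lemma dd_ham_omega_vf tau eps k x v : tau <> 0 -> eps <> 0 -> tangent x v ->
  dd (ham tau eps) x v (omega eps k v (vf tau eps k x)).
Proof.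
intros Htau Heps [Hv _].
rewrite omega_vf, Hv, Rmult_0_r, Rminus_0_r by assumption.
apply dd_ham.
Qed.

Lemma dd_ham_vf tau eps k x : tau <> 0 -> eps <> 0 -> onM x ->
  dd (ham tau eps) x (vf tau eps k x) 0.
Proof.
intros Htau Heps Hx.
rewrite <- (omega_diag eps k (vf tau eps k x)).
apply dd_ham_omega_vf; auto using vf_tangent.
Qed.

Lemma dd_Phi_vf tau eps k x : tau <> 0 -> eps <> 0 ->
  dd (Phi eps k) x (vf tau eps k x) 0.
Proof.
intros Htau Heps.
replace 0 with (dPhi eps k x (vf tau eps k x))
  by (destruct x; unfold dPhi, vf, mu; cbn; field; auto).
apply dd_Phi.
Qed.

Definition dh_dPhi_independent (tau eps k : R) (y : st) : Prop :=
  exists v w a b c d, tangent y v /\ tangent y w /\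
    dd (ham tau eps) y v a /\ dd (ham tau eps) y w b /\
    dd (Phi eps k) y v c /\ dd (Phi eps k) y w d /\
    a * d - b * c <> 0.

Lemma dh_dPhi_independent_of tau eps k y v w D : tangent y v -> tangent y w ->
  dham tau eps y v * dPhi eps k y w - dham tau eps y w * dPhi eps k y v = D ->
  D <> 0 -> dh_dPhi_independent tau eps k y.
Proof.
intros Hv Hw <- Hdet.
exists v, w, (dham tau eps y v), (dham tau eps y w), (dPhi eps k y v), (dPhi eps k y w).
repeat (split; [assumption || apply dd_ham || apply dd_Phi|]); assumption.
Qed.

Definition momentum (y : st) : st := St 0 0 0 (p1 y) (p2 y) (p3 y).

Lemma momentum_tangent y : onM y -> tangent y (momentum y).
Proof. intros [_ Hgp]; split; cbn; lra. Qed.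

Lemma dham_momentum_pos tau eps y : 0 < tau -> eps <> 0 ->
  0 < p1 y ^ 2 + p2 y ^ 2 + p3 y ^ 2 -> 0 < dham tau eps y (momentum y).
Proof.
intros Htau Heps Hp; unfold dham, momentum; cbn [g1 g2 g3 p1 p2 p3].
apply Rmult_lt_0_compat; [apply Rdiv_lt_0_compat; [now apply pow2_gt_0 | lra] | nra].
Qed.

Lemma dh_dPhi_independent_of_p3 tau eps k y : 0 < tau -> eps <> 0 ->
  onM y -> p3 y <> 0 -> dh_dPhi_independent tau eps k y.
Proof.
intros Htau Heps Hy Hp3; pose proof Hy as [Hg Hgp].
set (w := St 0 0 0 (g2 y * p3 y - g3 y * p2 y) (g3 y * p1 y - g1 y * p3 y)
                   (g1 y * p2 y - g2 y * p1 y)).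
apply (dh_dPhi_independent_of _ _ _ _ (momentum y) w
         (- dham tau eps y (momentum y) * p3 y)).
- now apply momentum_tangent.
- split; cbn; ring.
- transitivity (dham tau eps y (momentum y)
                * (g3 y * (g1 y * p1 y + g2 y * p2 y + g3 y * p3 y)
                   - (g1 y ^ 2 + g2 y ^ 2 + g3 y ^ 2) * p3 y)).
  { unfold dham, dPhi, momentum, w; cbn [g1 g2 g3 p1 p2 p3]; ring. }
  rewrite Hg, Hgp; ring.
- apply Rmult_integral_contrapositive_currified; [|exact Hp3].
  apply Ropp_neq_0_compat, Rgt_not_eq, dham_momentum_pos; auto; nra.
Qed.

Lemma dh_dPhi_independent_at_pole tau eps k y : 0 < tau -> eps <> 0 ->
  onM y -> g1 y = 0 -> g2 y = 0 -> 0 < p1 y ^ 2 + p2 y ^ 2 ->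
  dh_dPhi_independent tau eps k y.
Proof.
intros Htau Heps Hy H1 H2 Hp.
set (w := St (p2 y) (- p1 y) 0 0 0 0).
apply (dh_dPhi_independent_of _ _ _ _ (momentum y) w
         (dham tau eps y (momentum y) * (p1 y ^ 2 + p2 y ^ 2))).
- now apply momentum_tangent.
- split; cbn; rewrite ?H1, ?H2; ring.
- unfold dham, dPhi, momentum, w; cbn [g1 g2 g3 p1 p2 p3]; rewrite H1, H2; ring.
- apply Rgt_not_eq, Rmult_lt_0_compat; [apply dham_momentum_pos|]; auto; nra.
Qed.

Definition shift_p (x : st) (u1 u2 u3 : R) : st :=
  St (g1 x) (g2 x) (g3 x) (p1 x + u1) (p2 x + u2) (p3 x + u3).

Lemma onM_shift_p x u1 u2 u3 : onM x ->
  g1 x * u1 + g2 x * u2 + g3 x * u3 = 0 -> onM (shift_p x u1 u2 u3).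
Proof. intros [Hg Hgp] Hu; split; cbn; [exact Hg | lra]. Qed.

Lemma st_dist2_shift_p x u1 u2 u3 :
  st_dist2 x (shift_p x u1 u2 u3) = u1 ^ 2 + u2 ^ 2 + u3 ^ 2.
Proof. unfold st_dist2, shift_p; cbn [g1 g2 g3 p1 p2 p3]; ring. Qed.

Lemma dh_dPhi_independent_dense tau eps k x e : 0 < tau -> eps <> 0 ->
  onM x -> 0 < e ->
  exists y, onM y /\ st_dist2 x y < e /\ dh_dPhi_independent tau eps k y.
Proof.
intros Htau Heps Hx He; pose proof Hx as [Hg _].
assert (Hxx : st_dist2 x x = 0) by (unfold st_dist2; ring).
set (s := sqrt (e / 2)).
assert (Hs : 0 < s) by (apply sqrt_lt_R0; lra).
assert (Hse : s ^ 2 < e) by (unfold s; rewrite pow2_sqrt; lra).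
destruct (Req_dec (p3 x) 0) as [Hp3 | Hp3].
2: { exists x; split; [|split]; [exact Hx | lra |].
     now apply dh_dPhi_independent_of_p3. }
set (G := g1 x ^ 2 + g2 x ^ 2).
destruct (Req_dec G 0) as [HG | HG].
- assert (H1 : g1 x = 0) by (unfold G in HG; nra).
  assert (H2 : g2 x = 0) by (unfold G in HG; nra).
  destruct (Req_dec (p1 x ^ 2 + p2 x ^ 2) 0) as [Hp | Hp].
  + assert (Hy : onM (shift_p x s 0 0)).
    { apply onM_shift_p; [exact Hx | rewrite H1, H2; ring]. }
    exists (shift_p x s 0 0); split; [|split]; [exact Hy | |].
    * rewrite st_dist2_shift_p; lra.
    * assert (p1 x = 0) by nra; assert (p2 x = 0) by nra.
      apply dh_dPhi_independent_at_pole; auto; cbn [g1 g2 p1 p2 shift_p]; nra.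
  + exists x; split; [|split]; [exact Hx | lra |].
    apply dh_dPhi_independent_at_pole; auto; nra.
- assert (HG1 : G <= 1) by (unfold G; nra).
  exists (shift_p x (s * g3 x * g1 x) (s * g3 x * g2 x) (- s * G)).
  assert (Hy : onM (shift_p x (s * g3 x * g1 x) (s * g3 x * g2 x) (- s * G))).
  { apply onM_shift_p; [exact Hx | unfold G; ring]. }
  split; [|split]; [exact Hy | |].
  + rewrite st_dist2_shift_p.
    replace ((s * g3 x * g1 x) ^ 2 + (s * g3 x * g2 x) ^ 2 + (- s * G) ^ 2)
      with (s ^ 2 * G * (g1 x ^ 2 + g2 x ^ 2 + g3 x ^ 2)) by (unfold G; ring).
    rewrite Hg; nra.
  + apply dh_dPhi_independent_of_p3; auto; cbn.
    rewrite Hp3; nra.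
Qed.

Theorem theorem9p3 (tau eps k : R) (Htau : 0 < tau) (Heps : eps <> 0) :
  (* the vector field is tangent to T^*S^2 *)
  (forall x, onM x -> tangent x (vf tau eps k x)) /\
  (* omega restricted to T^*S^2 is nondegenerate (symplectic) *)
  (forall x, onM x -> forall w, tangent x w ->
     (forall v, tangent x v -> omega eps k v w = 0) -> w = st_zero) /\
  (* the system is Hamiltonian: i_X omega = -dh on T(T^*S^2) *)
  (forall x, onM x -> forall v, tangent x v ->
     dd (ham tau eps) x v (omega eps k v (vf tau eps k x))) /\
  (* h and Phi are first integrals *)
  (forall x, onM x ->
     dd (ham tau eps) x (vf tau eps k x) 0 /\
     dd (Phi eps k) x (vf tau eps k x) 0) /\
  (* h and Phi are in involution: {h, Phi} = omega(X_h, X_Phi) = 0 *)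
  (forall x, onM x -> forall Y, tangent x Y ->
     (forall v, tangent x v -> dd (Phi eps k) x v (omega eps k v Y)) ->
     omega eps k (vf tau eps k x) Y = 0) /\
  (* dh and dPhi (restricted to T(T^*S^2)) are independent on a dense subset *)
  (forall x, onM x -> forall e, 0 < e ->
     exists y, onM y /\ st_dist2 x y < e /\
       exists v w a b c d, tangent y v /\ tangent y w /\
         dd (ham tau eps) y v a /\ dd (ham tau eps) y w b /\
         dd (Phi eps k) y v c /\ dd (Phi eps k) y w d /\
         a * d - b * c <> 0).
Proof.
assert (Htau0 : tau <> 0) by lra.
split; [|split; [|split; [|split; [|split]]]].
- intros x; apply vf_tangent.
- intros x Hx w; apply omega_nondegenerate, Hx.
- intros x _ v; apply dd_ham_omega_vf; assumption.
- intros x Hx; split; [apply dd_ham_vf | apply dd_Phi_vf]; assumption.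
- intros x Hx Y _ HY.
  apply (dd_unique (Phi eps k) x (vf tau eps k x)).
  + apply HY, vf_tangent, Hx.
  + apply dd_Phi_vf; assumption.
- intros x Hx e He; apply dh_dPhi_independent_dense; assumption.
Qed.
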